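(* Let $u$ be a harmonic function on $\mathbf D$ for which $C:=\sup\{u(z)\,(\log\frac{e}{1-|z|})^{-1}: z\in\mathbf D\}<\infty$. For every $\sigma>0$ there is $\tau_1=\tau_1(C,\sigma)>0$ such that: whenever $\theta\in[0,2\pi]$ and $r\in(0,1)$ satisfy $u(re^{i\theta})>\sigma\log\frac{e}{1-r}$, then $u(re^{i(\theta+\delta)})>\frac\sigma2\log\frac{e}{1-r}$ for all $|\delta|<\tau_1(1-r)$.
   Context: $\mathbf D$ is the open unit disc. *)

From Stdlib Require Import Reals.
From Coquelicot Require Import Coquelicot.
Open Scope R_scope.

(* Points of the plane are pairs (x, y) of reals, z = x + i y. *)
Definition in_D (x y : R) : Prop := x ^ 2 + y ^ 2 < 1.

Definition cont2 (f : R -> R -> R) (x y : R) : Prop :=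
  continuous (fun p : R * R => f (fst p) (snd p)) (x, y).

Definition harmonic_D (u : R -> R -> R) : Prop :=
  exists ux uy uxx uxy uyx uyy : R -> R -> R,
    forall x y, in_D x y ->
      is_derive (fun t => u t y) x (ux x y) /\
      is_derive (fun t => u x t) y (uy x y) /\
      is_derive (fun t => ux t y) x (uxx x y) /\
      is_derive (fun t => ux x t) y (uxy x y) /\
      is_derive (fun t => uy t y) x (uyx x y) /\
      is_derive (fun t => uy x t) y (uyy x y) /\
      cont2 u x y /\ cont2 ux x y /\ cont2 uy x y /\
      cont2 uxx x y /\ cont2 uxy x y /\ cont2 uyx x y /\ cont2 uyy x y /\
      uxx x y + uyy x y = 0.

Definition wlog (r : R) : R := ln (exp 1 / (1 - r)).

Definition ratio_set (u : R -> R -> R) : R -> Prop :=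
  fun v => exists x y, in_D x y /\ v = u x y / wlog (sqrt (x ^ 2 + y ^ 2)).

From Stdlib Require Import Reals Lra Psatz.
From Coquelicot Require Import Coquelicot.
Open Scope R_scope.

(* Put L = log (e / (1 - r)) and M = C (L + log 2).  On the disc |z| <= (1 + r) / 2
   the bound on the ratio gives u <= M, so h = M - u is a nonnegative harmonic function
   there.  On circles around a point z0, the Fourier coefficients of a harmonic function
   of order n solve Euler's equation r^2 G'' + r G' - n^2 G = 0; for n = 0, 1 this gives
   the mean value property and the first moments pi rho grad u(z0).  Integrating h against
   1 + (a cos + b sin) over the circle of radius rho = (1 - r) / 2 around a point of
   |z| = r yields |grad h| <= 2 h / rho, hence phi(delta) = h(r e^(i (theta + delta)))
   satisfies |phi'| <= 4 phi / (1 - r).  By Gronwall, phi(delta) <= (1 + sigma / 4C) phi(0)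
   when |delta| < tau1 (1 - r) with tau1 = log (1 + sigma / 4C) / 4, and since
   u(r e^(i theta)) > sigma L this leaves u(r e^(i (theta + delta))) > sigma L / 2. *)

Lemma in_D_locally_2d x y : in_D x y -> locally_2d in_D x y.
Proof.
  unfold in_D; intros Hxy.
  assert (Hc : continuity_2d_pt (fun u v => u * u + v * v) x y).
  { apply continuity_2d_pt_plus; apply continuity_2d_pt_mult;
      auto using continuity_2d_pt_id1, continuity_2d_pt_id2. }
  assert (He : 0 < 1 - (x * x + y * y)) by lra.
  destruct (Hc (mkposreal _ He)) as [d Hd].
  exists d; intros u v Hu Hv.
  specialize (Hd u v Hu Hv); simpl in Hd; apply Rabs_lt_between in Hd; lra.
Qed.

Lemma differentiable_pt_lim_of_partials (F Fx Fy : R -> R -> R) x0 y0 :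
  locally_2d (fun x y => is_derive (fun t => F t y) x (Fx x y) /\
                         is_derive (fun t => F x t) y (Fy x y)) x0 y0 ->
  continuity_2d_pt Fx x0 y0 -> continuity_2d_pt Fy x0 y0 ->
  differentiable_pt_lim F x0 y0 (Fx x0 y0) (Fy x0 y0).
Proof.
  intros [d0 Hd] Cx Cy eps.
  assert (He : 0 < eps / 2) by (destruct eps; simpl; lra).
  destruct (Cx (mkposreal _ He)) as [d1 H1].
  destruct (Cy (mkposreal _ He)) as [d2 H2]; simpl in H1, H2.
  assert (Hpos : 0 < Rmin d0 (Rmin d1 d2)).
  { destruct d0, d1, d2; simpl; repeat apply Rmin_pos; lra. }
  exists (mkposreal _ Hpos); simpl; intros u v Hu Hv.
  pose proof (Rmin_l d0 (Rmin d1 d2)); pose proof (Rmin_r d0 (Rmin d1 d2));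
  pose proof (Rmin_l d1 d2); pose proof (Rmin_r d1 d2).
  assert (H00 : Rabs (x0 - x0) < Rmin d0 (Rmin d1 d2))
    by (rewrite Rminus_eq_0, Rabs_R0; exact Hpos).
  destruct (MVT_cor4 (fun t => F t v) (fun t => Fx t v) x0 (Rabs (u - x0)))
    with (b := u) as [c [Ec Hc]]; [ | apply Rle_refl | ].
  { intros c Hc; apply Hd; lra. }
  destruct (MVT_cor4 (fun t => F x0 t) (fun t => Fy x0 t) y0 (Rabs (v - y0)))
    with (b := v) as [c' [Ec' Hc']]; [ | apply Rle_refl | ].
  { intros c' Hc'; apply Hd; lra. }
  assert (A1 : Rabs (Fx c v - Fx x0 y0) < eps / 2) by (apply H1; lra).
  assert (A2 : Rabs (Fy x0 c' - Fy x0 y0) < eps / 2) by (apply H2; lra).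
  replace (F u v - F x0 y0 - (Fx x0 y0 * (u - x0) + Fy x0 y0 * (v - y0)))
    with ((Fx c v - Fx x0 y0) * (u - x0) + (Fy x0 c' - Fy x0 y0) * (v - y0))
    by lra.
  eapply Rle_trans; [apply Rabs_triang | rewrite !Rabs_mult].
  pose proof (Rmax_l (Rabs (u - x0)) (Rabs (v - y0))).
  pose proof (Rmax_r (Rabs (u - x0)) (Rabs (v - y0))).
  pose proof (Rabs_pos (u - x0)); pose proof (Rabs_pos (v - y0)).
  pose proof (Rabs_pos (Fx c v - Fx x0 y0)); pose proof (Rabs_pos (Fy x0 c' - Fy x0 y0)).
  nra.
Qed.

Lemma is_derive_comp_2d (F Fx Fy : R -> R -> R) (X Y : R -> R) t dX dY :
  locally_2d (fun x y => is_derive (fun s => F s y) x (Fx x y) /\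
                         is_derive (fun s => F x s) y (Fy x y)) (X t) (Y t) ->
  continuity_2d_pt Fx (X t) (Y t) -> continuity_2d_pt Fy (X t) (Y t) ->
  is_derive X t dX -> is_derive Y t dY ->
  is_derive (fun s => F (X s) (Y s)) t (Fx (X t) (Y t) * dX + Fy (X t) (Y t) * dY).
Proof.
  intros HF Cx Cy HX HY.
  apply is_derive_Reals; apply is_derive_Reals in HX; apply is_derive_Reals in HY.
  apply derivable_pt_lim_comp_2d; auto.
  apply differentiable_pt_lim_of_partials; auto.
Qed.

Definition C1_on_D (F Fx Fy : R -> R -> R) : Prop :=
  forall x y, in_D x y ->
    is_derive (fun t => F t y) x (Fx x y) /\ is_derive (fun t => F x t) y (Fy x y) /\
    cont2 Fx x y /\ cont2 Fy x y.

Lemma cont2_continuity_2d_pt f x y : cont2 f x y -> continuity_2d_pt f x y.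
Proof. apply continuity_2d_pt_filterlim. Qed.

Lemma is_derive_comp_C1_on_D (F Fx Fy : R -> R -> R) (X Y : R -> R) t dX dY :
  C1_on_D F Fx Fy -> in_D (X t) (Y t) -> is_derive X t dX -> is_derive Y t dY ->
  is_derive (fun s => F (X s) (Y s)) t (Fx (X t) (Y t) * dX + Fy (X t) (Y t) * dY).
Proof.
  intros HF HD HX HY.
  destruct (HF _ _ HD) as (_ & _ & Cx & Cy).
  apply is_derive_comp_2d; auto using cont2_continuity_2d_pt.
  apply (locally_2d_impl in_D); [ | now apply in_D_locally_2d ].
  apply locally_2d_forall; intros x y Hxy; now destruct (HF x y Hxy) as (? & ? & _).
Qed.

Definition polar (f : R -> R -> R) a b r s := f (a + r * cos s) (b + r * sin s).

Lemma is_derive_polar_r F Fx Fy a b r s :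
  C1_on_D F Fx Fy -> in_D (a + r * cos s) (b + r * sin s) ->
  is_derive (fun r => polar F a b r s) r (polar Fx a b r s * cos s + polar Fy a b r s * sin s).
Proof.
  intros HF HD; unfold polar.
  apply (is_derive_comp_C1_on_D F Fx Fy (fun r => a + r * cos s) (fun r => b + r * sin s));
    auto; auto_derive; auto; ring.
Qed.

Lemma is_derive_polar_s F Fx Fy a b r s :
  C1_on_D F Fx Fy -> in_D (a + r * cos s) (b + r * sin s) ->
  is_derive (fun s => polar F a b r s) s
    (polar Fx a b r s * (- (r * sin s)) + polar Fy a b r s * (r * cos s)).
Proof.
  intros HF HD; unfold polar.
  apply (is_derive_comp_C1_on_D F Fx Fy (fun s => a + r * cos s) (fun s => b + r * sin s));
    auto; auto_derive; auto; ring.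
Qed.

Lemma continuity_2d_pt_snd (w : R -> R) r s :
  continuous w s -> continuity_2d_pt (fun _ s => w s) r s.
Proof.
  intros Hw; apply (continuity_1d_2d_pt_comp w (fun _ v => v)).
  - now apply continuity_pt_filterlim.
  - apply continuity_2d_pt_id2.
Qed.

Lemma continuous_cos s : continuous cos s.
Proof. apply continuity_pt_filterlim, continuity_cos. Qed.

Lemma continuous_sin s : continuous sin s.
Proof. apply continuity_pt_filterlim, continuity_sin. Qed.

Lemma continuity_2d_pt_cos r s : continuity_2d_pt (fun _ s => cos s) r s.
Proof. apply continuity_2d_pt_snd, continuous_cos. Qed.

Lemma continuity_2d_pt_sin r s : continuity_2d_pt (fun _ s => sin s) r s.
Proof. apply continuity_2d_pt_snd, continuous_sin. Qed.

Lemma continuity_2d_pt_polar f a b r s :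
  cont2 f (a + r * cos s) (b + r * sin s) -> continuity_2d_pt (polar f a b) r s.
Proof.
  intros Hf eps; apply cont2_continuity_2d_pt in Hf; destruct (Hf eps) as [d Hd].
  assert (CX : continuity_2d_pt (fun r s => a + r * cos s) r s).
  { apply continuity_2d_pt_plus, continuity_2d_pt_mult;
      auto using continuity_2d_pt_const, continuity_2d_pt_id1, continuity_2d_pt_cos. }
  assert (CY : continuity_2d_pt (fun r s => b + r * sin s) r s).
  { apply continuity_2d_pt_plus, continuity_2d_pt_mult;
      auto using continuity_2d_pt_const, continuity_2d_pt_id1, continuity_2d_pt_sin. }
  destruct (CX d) as [d1 H1]; destruct (CY d) as [d2 H2].
  assert (Hm : 0 < Rmin d1 d2) by (apply Rmin_pos; apply cond_pos).
  exists (mkposreal _ Hm); simpl; intros u v Hu Hv.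
  pose proof (Rmin_l d1 d2); pose proof (Rmin_r d1 d2).
  apply Hd; [apply H1 | apply H2]; lra.
Qed.

Lemma continuous_fun_snd (f : R -> R -> R) r s :
  continuity_2d_pt f r s -> continuous (fun t => f r t) s.
Proof.
  intros H; apply filterlim_locally; intros eps; destruct (H eps) as [d Hd].
  exists d; intros t Ht; apply Hd; [rewrite Rminus_eq_0, Rabs_R0; apply cond_pos | exact Ht].
Qed.

Lemma ex_RInt_continuity_2d_pt (f : R -> R -> R) r a b :
  (forall s, continuity_2d_pt f r s) -> ex_RInt (fun s => f r s) a b.
Proof.
  intros H; apply (@ex_RInt_continuous R_CompleteNormedModule).
  intros s _; apply continuous_fun_snd, H.
Qed.

Lemma is_derive_RInt_param_interval (f df : R -> R -> R) a b R0 x :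
  Rabs x < R0 ->
  (forall y t, Rabs y < R0 -> is_derive (fun z => f z t) y (df y t)) ->
  (forall y t, Rabs y < R0 -> continuity_2d_pt df y t) ->
  (forall y t, Rabs y < R0 -> continuity_2d_pt f y t) ->
  is_derive (fun z => RInt (fun t => f z t) a b) x (RInt (fun t => df x t) a b).
Proof.
  intros Hx Hd Hcd Hcf.
  assert (He : 0 < R0 - Rabs x) by lra.
  assert (Hloc : locally x (fun y => Rabs y < R0)).
  { exists (mkposreal _ He); intros y Hy; change (Rabs (y - x) < R0 - Rabs x) in Hy.
    pose proof (Rabs_triang_inv y x); lra. }
  rewrite (RInt_ext _ (fun t => Derive (fun z => f z t) x))
    by (intros t _; symmetry; apply is_derive_unique, Hd, Hx).
  apply is_derive_RInt_param.
  - apply (filter_imp _ _ (fun y Hy t _ => ex_intro _ (df y t) (Hd y t Hy)) Hloc).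
  - intros t _; apply continuity_2d_pt_ext_loc with (f := df); [ | now apply Hcd ].
    exists (mkposreal _ He); intros y s Hy _; simpl in Hy.
    pose proof (Rabs_triang_inv y x).
    symmetry; apply is_derive_unique, Hd; lra.
  - apply (filter_imp _ _ (fun y Hy => ex_RInt_continuity_2d_pt f y a b (fun t => Hcf y t Hy))
                       Hloc).
Qed.

Lemma is_derive_mult_const f x df c :
  is_derive f x df -> is_derive (fun y => f y * c) x (df * c).
Proof.
  intros H; evar_last.
  - apply (Derive.is_derive_mult f (fun _ => c)); [exact H | apply is_derive_const].
  - unfold zero; simpl; ring.
Qed.

Lemma is_RInt_zero_unique (f : R -> R) a b l :
  is_RInt f a b l -> (forall s, f s = 0) -> l = 0.
Proof.
  intros H E.
  apply (is_RInt_ext _ (fun _ => 0)) in H; [ | intros; apply E].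
  apply (@is_RInt_unique R_CompleteNormedModule) in H.
  rewrite RInt_const in H; rewrite <- H; apply Rmult_0_r.
Qed.

Lemma eq_of_is_derive_zero f df r : 0 < r ->
  (forall x, 0 <= x <= r -> is_derive f x (df x)) ->
  (forall x, 0 < x < r -> df x = 0) -> f r = f 0.
Proof.
  intros Hr Hd H0.
  destruct (MVT_cor2 f df 0 r Hr) as [c [E Hc]].
  - intros x Hx; apply is_derive_Reals, Hd; lra.
  - rewrite H0 in E by lra; lra.
Qed.

Lemma is_derive_id_mult f x df :
  is_derive f x df -> is_derive (fun y => y * f y) x (f x + x * df).
Proof.
  intros H; apply (is_derive_ext_loc (fun y => y * f y)); [now apply filter_forall|].
  evar_last; [apply (Derive.is_derive_mult (fun y => y) f); [apply is_derive_id | exact H]|].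
  unfold one; simpl; ring.
Qed.

Section EulerEquation.
Variables (G G1 G2 : R -> R) (R0 : R).
Hypothesis dG : forall r, 0 <= r < R0 -> is_derive G r (G1 r).
Hypothesis dG1 : forall r, 0 <= r < R0 -> is_derive G1 r (G2 r).

Lemma Euler_equation_0 :
  (forall r, 0 <= r < R0 -> r ^ 2 * G2 r + r * G1 r = 0) ->
  forall r, 0 <= r < R0 -> G r = G 0.
Proof.
  intros ode r Hr.
  (* [r (r G')' = r^2 G'' + r G'] *)
  assert (G1_0 : forall x, 0 < x < R0 -> G1 x = 0).
  { intros x Hx.
    assert (E : x * G1 x = 0 * G1 0).
    { apply (eq_of_is_derive_zero (fun y => y * G1 y) (fun y => G1 y + y * G2 y)); [lra | | ].
      - intros y Hy; apply is_derive_id_mult, dG1; lra.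
      - intros y Hy; specialize (ode y ltac:(lra)).
        apply (Rmult_eq_reg_l y); [ | lra]; simpl in ode; nra. }
    apply (Rmult_eq_reg_l x); lra. }
  destruct (Req_dec r 0) as [-> | Hr0]; [reflexivity|].
  apply (eq_of_is_derive_zero G G1); [lra | | ].
  - intros y Hy; apply dG; lra.
  - intros y Hy; apply G1_0; lra.
Qed.

Lemma Euler_equation_1 :
  (forall r, 0 <= r < R0 -> r ^ 2 * G2 r + r * G1 r - G r = 0) ->
  forall r, 0 <= r < R0 -> G r = r * G1 0.
Proof.
  intros ode r Hr.
  (* [(r (r G' - G))' = r^2 G'' + r G' - G] *)
  assert (Wr : forall x, 0 < x < R0 -> x * G1 x - G x = 0).
  { intros x Hx.
    assert (E : x * (x * G1 x - G x) = 0 * (0 * G1 0 - G 0)).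
    { apply (eq_of_is_derive_zero (fun y => y * (y * G1 y - G y))
               (fun y => y ^ 2 * G2 y + y * G1 y - G y)); [lra | | ].
      - intros y Hy; evar_last; [apply is_derive_id_mult;
          apply (is_derive_minus (fun y => y * G1 y) G);
          [apply is_derive_id_mult, dG1 | apply dG]; lra|].
        unfold minus, plus, opp; simpl; ring.
      - intros y Hy; apply ode; lra. }
    apply (Rmult_eq_reg_l x); lra. }
  assert (G2_0 : forall x, 0 < x < R0 -> G2 x = 0).
  { intros x Hx; specialize (ode x ltac:(lra)); specialize (Wr x Hx).
    apply (Rmult_eq_reg_l (x ^ 2)); [lra | apply pow_nonzero; lra]. }
  destruct (Req_dec r 0) as [-> | Hr0].
  - specialize (ode 0 ltac:(lra)); simpl in ode; lra.
  - rewrite <- (eq_of_is_derive_zero G1 G2 r);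
      [ | lra | intros; apply dG1; lra | intros; apply G2_0; lra ].
    specialize (Wr r ltac:(lra)); lra.
Qed.

End EulerEquation.

Lemma is_RInt_derive_periodic (K dK : R -> R) a b :
  (forall s, is_derive K s (dK s)) -> (forall s, continuous dK s) -> K b = K a ->
  is_RInt dK a b 0.
Proof.
  intros Hd Hc Hper.
  replace 0 with (minus (K b) (K a)) by (rewrite Hper; unfold minus, plus, opp; simpl; ring).
  apply (@is_RInt_derive R_CompleteNormedModule); auto.
Qed.

Lemma continuous_trig_comb al be s : continuous (fun s => al * cos s + be * sin s) s.
Proof.
  apply (continuous_plus (fun s => al * cos s) (fun s => be * sin s));
    [ apply (continuous_mult (fun _ => al) cos) | apply (continuous_mult (fun _ => be) sin) ];
    auto using continuous_const, continuous_cos, continuous_sin.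
Qed.

Lemma is_RInt_trig_comb al be :
  is_RInt (fun s => al * cos s + be * sin s) 0 (2 * PI) 0.
Proof.
  apply (is_RInt_derive_periodic (fun s => al * sin s - be * cos s));
    [ intros; auto_derive; auto; ring | apply continuous_trig_comb | ].
  rewrite sin_2PI, cos_2PI, sin_0, cos_0; ring.
Qed.

Lemma is_RInt_trig_product p q al be :
  is_RInt (fun s => (p * cos s + q * sin s) * (al * cos s + be * sin s)) 0 (2 * PI)
    (PI * (p * al + q * be)).
Proof.
  set (F s := p * al * ((s + sin s * cos s) / 2) + q * be * ((s - sin s * cos s) / 2)
              + (p * be + q * al) * (sin s ^ 2 / 2)).
  replace (PI * (p * al + q * be)) with (minus (F (2 * PI)) (F 0)).
  2:{ unfold F, minus, plus, opp; simpl.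
      rewrite sin_2PI, cos_2PI, sin_0, cos_0; field. }
  apply (@is_RInt_derive R_CompleteNormedModule).
  - intros s _; unfold F; auto_derive; auto.
    pose proof (sin2_cos2 s) as E; unfold Rsqr in E.
    set (c := cos s) in *; set (z := sin s) in *.
    replace (1 + (1 * c * c + z * (1 * - z))) with (2 * c * c) by nra.
    replace (1 + - (1 * c * c + z * (1 * - z))) with (2 * z * z) by nra.
    field.
  - intros s _; apply (continuous_mult (fun s => p * cos s + q * sin s));
      apply continuous_trig_comb.
Qed.

Lemma Gronwall_forward (phi dphi : R -> R) K d : 0 <= d ->
  (forall s, is_derive phi s (dphi s)) -> (forall s, dphi s <= K * phi s) ->
  phi d <= phi 0 * exp (K * d).
Proof.
  intros Hd0 Hd Hb.
  destruct (Req_dec d 0) as [-> | Hne]; [rewrite Rmult_0_r, exp_0; lra|].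
  destruct (MVT_cor2 (fun s => phi s * exp (- (K * s)))
              (fun s => (dphi s - K * phi s) * exp (- (K * s))) 0 d ltac:(lra))
    as [c [E _]].
  { intros c _; apply is_derive_Reals; evar_last.
    - apply (Derive.is_derive_mult phi (fun s => exp (- (K * s)))); [apply Hd | auto_derive; auto].
    - simpl; ring. }
  assert (Hc : (dphi c - K * phi c) * exp (- (K * c)) * (d - 0) <= 0).
  { pose proof (exp_pos (- (K * c))); specialize (Hb c).
    apply Rmult_le_0_r; [ | lra]; apply Rmult_le_0_r; lra. }
  rewrite Rmult_0_r, Ropp_0, exp_0, Rmult_1_r in E.
  replace (phi d) with (phi d * exp (- (K * d)) * exp (K * d))
    by (rewrite Rmult_assoc, <- exp_plus, Rplus_opp_l, exp_0; ring).
  apply Rmult_le_compat_r; [left; apply exp_pos | lra].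
Qed.

Lemma Gronwall (phi dphi : R -> R) K d :
  (forall s, is_derive phi s (dphi s)) -> (forall s, Rabs (dphi s) <= K * phi s) ->
  phi d <= phi 0 * exp (K * Rabs d).
Proof.
  intros Hd Hb.
  destruct (Rle_or_lt 0 d) as [Hd0 | Hd0].
  - rewrite Rabs_right by lra; apply (Gronwall_forward phi dphi); auto.
    intros s; specialize (Hb s); apply Rabs_le_between in Hb; lra.
  - rewrite Rabs_left by lra.
    (* the backward estimate is the forward one for [s |-> phi (- s)] *)
    pose proof (Gronwall_forward (fun s => phi (- s)) (fun s => - dphi (- s)) K (- d)) as G.
    cbv beta in G; rewrite Ropp_involutive, Ropp_0 in G; apply G; [lra | | ].
    + intros s; evar_last; [apply (is_derive_comp phi Ropp); [apply Hd | auto_derive; auto]|].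
      unfold scal; simpl; unfold mult; simpl; ring.
    + intros s; specialize (Hb (- s)); apply Rabs_le_between in Hb; lra.
Qed.

Lemma Rabs_trig_comb_le al be s : al ^ 2 + be ^ 2 <= 1 -> Rabs (al * cos s + be * sin s) <= 1.
Proof.
  intros H; pose proof (sin2_cos2 s) as E; unfold Rsqr in E.
  assert (Hsq : (al * cos s + be * sin s) ^ 2 <= 1).
  { assert (Id : (al * cos s + be * sin s) ^ 2 + (al * sin s - be * cos s) ^ 2
                 = (al ^ 2 + be ^ 2) * (sin s * sin s + cos s * cos s)) by ring.
    rewrite E, Rmult_1_r in Id; pose proof (pow2_ge_0 (al * sin s - be * cos s)); lra. }
  rewrite <- (Rabs_R1); apply Rsqr_le_abs_0; unfold Rsqr; lra.
Qed.

Lemma norm_polar_le r al rho t : 0 <= r ->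
  (r * cos al + rho * cos t) ^ 2 + (r * sin al + rho * sin t) ^ 2 <= (r + Rabs rho) ^ 2.
Proof.
  intros Hr.
  replace ((r * cos al + rho * cos t) ^ 2 + (r * sin al + rho * sin t) ^ 2)
    with (r ^ 2 * (sin al * sin al + cos al * cos al) + rho ^ 2 * (sin t * sin t + cos t * cos t)
          + 2 * r * (rho * (cos al * cos t + sin al * sin t))) by ring.
  pose proof (sin2_cos2 al) as E1; pose proof (sin2_cos2 t) as E2; unfold Rsqr in E1, E2.
  rewrite E1, E2, <- cos_minus, <- (pow2_abs rho).
  assert (rho * cos (al - t) <= Rabs rho).
  { eapply Rle_trans; [apply Rle_abs | rewrite Rabs_mult].
    rewrite <- (Rmult_1_r (Rabs rho)) at 2; apply Rmult_le_compat_l; [apply Rabs_pos|].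
    apply Rabs_le; apply COS_bound. }
  pose proof (Rabs_pos rho); nra.
Qed.

Section Harmonic.
Variables u ux uy uxx uxy uyx uyy : R -> R -> R.
Hypothesis harmonic : forall x y, in_D x y ->
  is_derive (fun t => u t y) x (ux x y) /\
  is_derive (fun t => u x t) y (uy x y) /\
  is_derive (fun t => ux t y) x (uxx x y) /\
  is_derive (fun t => ux x t) y (uxy x y) /\
  is_derive (fun t => uy t y) x (uyx x y) /\
  is_derive (fun t => uy x t) y (uyy x y) /\
  cont2 u x y /\ cont2 ux x y /\ cont2 uy x y /\
  cont2 uxx x y /\ cont2 uxy x y /\ cont2 uyx x y /\ cont2 uyy x y /\
  uxx x y + uyy x y = 0.

Lemma C1_on_D_u : C1_on_D u ux uy.
Proof.
  intros x y H; destruct (harmonic x y H) as (? & ? & _ & _ & _ & _ & _ & ? & ? & _); auto.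
Qed.

Lemma C1_on_D_ux : C1_on_D ux uxx uxy.
Proof.
  intros x y H;
    destruct (harmonic x y H) as (_ & _ & ? & ? & _ & _ & _ & _ & _ & ? & ? & _); auto.
Qed.

Lemma C1_on_D_uy : C1_on_D uy uyx uyy.
Proof.
  intros x y H;
    destruct (harmonic x y H) as (_ & _ & _ & _ & ? & ? & _ & _ & _ & _ & _ & ? & ? & _); auto.
Qed.

Section Disc.
Variables a b R0 : R.
Hypothesis disc : forall r s, Rabs r < R0 -> in_D (a + r * cos s) (b + r * sin s).

Definition u_r r s := polar ux a b r s * cos s + polar uy a b r s * sin s.
Definition u_rr r s :=
  (polar uxx a b r s * cos s + polar uxy a b r s * sin s) * cos s
  + (polar uyx a b r s * cos s + polar uyy a b r s * sin s) * sin s.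
Definition u_s r s := polar ux a b r s * (- (r * sin s)) + polar uy a b r s * (r * cos s).
Definition u_ss r s :=
  (polar uxx a b r s * (- (r * sin s)) + polar uxy a b r s * (r * cos s)) * (- (r * sin s))
  + polar ux a b r s * (- (r * cos s))
  + ((polar uyx a b r s * (- (r * sin s)) + polar uyy a b r s * (r * cos s)) * (r * cos s)
     + polar uy a b r s * (- (r * sin s))).

Lemma is_derive_u_r r s : Rabs r < R0 -> is_derive (fun r => polar u a b r s) r (u_r r s).
Proof. intros H; apply is_derive_polar_r; auto using C1_on_D_u. Qed.

Lemma is_derive_u_rr r s : Rabs r < R0 -> is_derive (fun r => u_r r s) r (u_rr r s).
Proof.
  intros H; unfold u_r, u_rr.
  apply (is_derive_plus (fun r => polar ux a b r s * cos s) (fun r => polar uy a b r s * sin s));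
    apply is_derive_mult_const, is_derive_polar_r; auto using C1_on_D_ux, C1_on_D_uy.
Qed.

Lemma is_derive_u_s r s : Rabs r < R0 -> is_derive (fun s => polar u a b r s) s (u_s r s).
Proof. intros H; apply is_derive_polar_s; auto using C1_on_D_u. Qed.

Lemma is_derive_u_ss r s : Rabs r < R0 -> is_derive (fun s => u_s r s) s (u_ss r s).
Proof.
  intros H; unfold u_s, u_ss.
  apply (is_derive_plus (fun s => polar ux a b r s * (- (r * sin s)))
                        (fun s => polar uy a b r s * (r * cos s)));
    (evar_last; [apply Derive.is_derive_mult;
                 [apply is_derive_polar_s; auto using C1_on_D_ux, C1_on_D_uy |
                  auto_derive; auto]|]);
    simpl; ring.
Qed.

Lemma polar_laplace r s : Rabs r < R0 -> r ^ 2 * u_rr r s + r * u_r r s + u_ss r s = 0.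
Proof.
  intros H.
  destruct (harmonic _ _ (disc r s H)) as (_ & _ & _ & _ & _ & _ & _ & _ & _ & _ & _ & _ & _ & L).
  pose proof (sin2_cos2 s) as E; unfold Rsqr in E.
  unfold u_rr, u_r, u_ss, polar in *; nra.
Qed.

Ltac continuity_polar H :=
  repeat match goal with
  | |- continuity_2d_pt (fun r s => polar _ _ _ r s) _ _ => apply continuity_2d_pt_polar
  | |- continuity_2d_pt (polar _ _ _) _ _ => apply continuity_2d_pt_polar
  | |- continuity_2d_pt (fun r s => cos s) _ _ => apply continuity_2d_pt_cos
  | |- continuity_2d_pt (fun r s => sin s) _ _ => apply continuity_2d_pt_sin
  | |- continuity_2d_pt (fun r s => r) _ _ => apply continuity_2d_pt_id1
  | |- continuity_2d_pt (fun r s => _ + _) _ _ => apply continuity_2d_pt_plus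
  | |- continuity_2d_pt (fun r s => _ * _) _ _ => apply continuity_2d_pt_mult
  | |- continuity_2d_pt (fun r s => - _) _ _ => apply continuity_2d_pt_opp
  end;
  match goal with
  | |- cont2 _ (_ + _ * cos ?s) _ =>
      destruct (harmonic _ _ (disc _ s H))
        as (_ & _ & _ & _ & _ & _ & ? & ? & ? & ? & ? & ? & ? & _);
      assumption
  end.

Lemma continuity_2d_pt_u r s : Rabs r < R0 -> continuity_2d_pt (polar u a b) r s.
Proof. intros H; continuity_polar H. Qed.

Lemma continuity_2d_pt_u_r r s : Rabs r < R0 -> continuity_2d_pt u_r r s.
Proof. intros H; unfold u_r; continuity_polar H. Qed.

Lemma continuity_2d_pt_u_rr r s : Rabs r < R0 -> continuity_2d_pt u_rr r s.
Proof. intros H; unfold u_rr; continuity_polar H. Qed.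

Lemma continuity_2d_pt_u_ss r s : Rabs r < R0 -> continuity_2d_pt u_ss r s.
Proof. intros H; unfold u_ss; continuity_polar H. Qed.

Section Weight.
Variables (w w1 : R -> R) (lam : R).
Hypothesis dw : forall s, is_derive w s (w1 s).
Hypothesis dw1 : forall s, is_derive w1 s (- lam * w s).
Hypothesis w_periodic : w (2 * PI) = w 0.
Hypothesis w1_periodic : w1 (2 * PI) = w1 0.

Lemma continuous_w s : continuous w s.
Proof. apply (ex_derive_continuous w); exists (w1 s); apply dw. Qed.

Definition circle_moment r := RInt (fun s => polar u a b r s * w s) 0 (2 * PI).
Definition circle_moment_r r := RInt (fun s => u_r r s * w s) 0 (2 * PI).
Definition circle_moment_rr r := RInt (fun s => u_rr r s * w s) 0 (2 * PI).

Lemma continuity_2d_pt_weighted (f : R -> R -> R) r s :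
  continuity_2d_pt f r s -> continuity_2d_pt (fun r s => f r s * w s) r s.
Proof.
  intros H; apply continuity_2d_pt_mult; [exact H | apply continuity_2d_pt_snd, continuous_w].
Qed.

Lemma is_RInt_weighted (f : R -> R -> R) r :
  (forall s, continuity_2d_pt f r s) ->
  is_RInt (fun s => f r s * w s) 0 (2 * PI) (RInt (fun s => f r s * w s) 0 (2 * PI)).
Proof.
  intros H; apply (@RInt_correct R_CompleteNormedModule).
  apply (ex_RInt_continuity_2d_pt (fun r s => f r s * w s)).
  intros s; apply continuity_2d_pt_weighted, H.
Qed.

Lemma is_derive_circle_moment r : Rabs r < R0 -> is_derive circle_moment r (circle_moment_r r).
Proof.
  intros H.
  apply (is_derive_RInt_param_interval (fun r s => polar u a b r s * w s) (fun r s => u_r r s * w s)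
           _ _ R0); auto; intros y t Hy.
  - apply is_derive_mult_const, is_derive_u_r, Hy.
  - apply continuity_2d_pt_weighted, continuity_2d_pt_u_r, Hy.
  - apply continuity_2d_pt_weighted, continuity_2d_pt_u, Hy.
Qed.

Lemma is_derive_circle_moment_r r : Rabs r < R0 -> is_derive circle_moment_r r (circle_moment_rr r).
Proof.
  intros H.
  apply (is_derive_RInt_param_interval (fun r s => u_r r s * w s) (fun r s => u_rr r s * w s)
           _ _ R0); auto; intros y t Hy.
  - apply is_derive_mult_const, is_derive_u_rr, Hy.
  - apply continuity_2d_pt_weighted, continuity_2d_pt_u_rr, Hy.
  - apply continuity_2d_pt_weighted, continuity_2d_pt_u_r, Hy.
Qed.

(* Integrating the polar Laplace equation against [w] and moving both angular
   derivatives onto [w] (periodically, so without boundary terms) gives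
   Euler's equation for the moment. *)
Lemma circle_moment_Euler r : Rabs r < R0 ->
  r ^ 2 * circle_moment_rr r + r * circle_moment_r r - lam * circle_moment r = 0.
Proof.
  intros H.
  assert (IK : is_RInt (fun s => u_ss r s * w s + lam * (polar u a b r s * w s)) 0 (2 * PI) 0).
  { apply (is_RInt_derive_periodic (fun s => u_s r s * w s - polar u a b r s * w1 s)).
    - intros s; evar_last.
      + apply (is_derive_minus (fun s => u_s r s * w s) (fun s => polar u a b r s * w1 s));
          apply Derive.is_derive_mult; auto using is_derive_u_ss, is_derive_u_s.
      + unfold minus, plus, opp; simpl; ring.
    - intros s; apply (continuous_plus (fun s => u_ss r s * w s)).
      + apply (continuous_fun_snd (fun r s => u_ss r s * w s)).
        apply continuity_2d_pt_weighted, continuity_2d_pt_u_ss, H.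
      + apply (continuous_scal_r lam (fun s => polar u a b r s * w s)).
        apply (continuous_fun_snd (fun r s => polar u a b r s * w s)).
        apply continuity_2d_pt_weighted, continuity_2d_pt_u, H.
    - unfold u_s, polar; rewrite w_periodic, w1_periodic, cos_2PI, sin_2PI, cos_0, sin_0; ring. }
  pose proof (is_RInt_weighted u_rr r (fun s => continuity_2d_pt_u_rr r s H)) as IA.
  pose proof (is_RInt_weighted u_r r (fun s => continuity_2d_pt_u_r r s H)) as IB.
  pose proof (is_RInt_weighted (polar u a b) r (fun s => continuity_2d_pt_u r s H)) as IC.
  pose proof (is_RInt_minus _ _ _ _ _ _
    (is_RInt_plus _ _ _ _ _ _ (is_RInt_plus _ _ _ _ _ _ (is_RInt_scal _ _ _ (r ^ 2) _ IA)
                                 (is_RInt_scal _ _ _ r _ IB)) IK)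
    (is_RInt_scal _ _ _ lam _ IC)) as I.
  apply is_RInt_zero_unique in I.
  - revert I; unfold circle_moment, circle_moment_r, circle_moment_rr.
    unfold minus, plus, opp, scal; simpl; unfold mult; simpl; lra.
  - intros s; pose proof (polar_laplace r s H).
    unfold minus, plus, opp, scal; simpl; unfold mult; simpl; nra.
Qed.

End Weight.

Lemma polar_0 f s : polar f a b 0 s = f a b.
Proof. unfold polar; rewrite !Rmult_0_l, !Rplus_0_r; reflexivity. Qed.

Lemma harmonic_mean_value r : 0 <= r < R0 ->
  is_RInt (fun s => polar u a b r s) 0 (2 * PI) (2 * PI * u a b).
Proof.
  intros Hr.
  assert (dw : forall s, is_derive (fun _ : R => 1) s 0) by (intros; auto_derive; auto).
  assert (dw1 : forall s, is_derive (fun _ : R => 0) s (- 0 * 1))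
    by (intros; auto_derive; auto; ring).
  assert (E : circle_moment (fun _ => 1) r = circle_moment (fun _ => 1) 0).
  { apply (Euler_equation_0 _ (circle_moment_r (fun _ => 1)) (circle_moment_rr (fun _ => 1)) R0);
      auto;
      intros x Hx; assert (Hx' : Rabs x < R0) by (rewrite Rabs_right; lra).
    - apply (is_derive_circle_moment _ _ dw _ Hx').
    - apply (is_derive_circle_moment_r _ _ dw _ Hx').
    - pose proof (circle_moment_Euler _ _ _ dw dw1 eq_refl eq_refl _ Hx'); lra. }
  assert (E0 : circle_moment (fun _ => 1) 0 = 2 * PI * u a b).
  { unfold circle_moment.
    rewrite (RInt_ext _ (fun _ => u a b)) by (intros; rewrite polar_0; apply Rmult_1_r).
    rewrite RInt_const; unfold scal; simpl; unfold mult; simpl; ring. }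
  rewrite <- E0, <- E.
  apply (is_RInt_ext (fun s => polar u a b r s * 1)); [intros; apply Rmult_1_r|].
  apply (is_RInt_weighted _ _ dw (polar u a b)); intros s; apply continuity_2d_pt_u.
  rewrite Rabs_right; lra.
Qed.

Lemma harmonic_first_moment al be r : 0 <= r < R0 ->
  is_RInt (fun s => polar u a b r s * (al * cos s + be * sin s)) 0 (2 * PI)
    (r * (PI * (ux a b * al + uy a b * be))).
Proof.
  intros Hr.
  set (w s := al * cos s + be * sin s); set (w1 s := - al * sin s + be * cos s).
  assert (dw : forall s, is_derive w s (w1 s)) by (intros; unfold w, w1; auto_derive; auto; ring).
  assert (dw1 : forall s, is_derive w1 s (- (1) * w s))
    by (intros; unfold w, w1; auto_derive; auto; ring).
  assert (Pw : w (2 * PI) = w 0) by (unfold w; rewrite cos_2PI, sin_2PI, cos_0, sin_0; ring).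
  assert (Pw1 : w1 (2 * PI) = w1 0) by (unfold w1; rewrite cos_2PI, sin_2PI, cos_0, sin_0; ring).
  assert (E : circle_moment w r = r * circle_moment_r w 0).
  { apply (Euler_equation_1 _ (circle_moment_r w) (circle_moment_rr w) R0); auto;
      intros x Hx; assert (Hx' : Rabs x < R0) by (rewrite Rabs_right; lra).
    - apply (is_derive_circle_moment _ _ dw _ Hx').
    - apply (is_derive_circle_moment_r _ _ dw _ Hx').
    - pose proof (circle_moment_Euler _ _ _ dw dw1 Pw Pw1 _ Hx'); lra. }
  assert (E0 : circle_moment_r w 0 = PI * (ux a b * al + uy a b * be)).
  { apply (@is_RInt_unique R_CompleteNormedModule).
    apply (is_RInt_ext (fun s => (ux a b * cos s + uy a b * sin s) * (al * cos s + be * sin s)));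
      [intros; unfold u_r; rewrite !polar_0; reflexivity | apply is_RInt_trig_product]. }
  rewrite <- E0, <- E.
  apply (is_RInt_weighted _ _ dw (polar u a b)); intros s; apply continuity_2d_pt_u.
  rewrite Rabs_right; lra.
Qed.

Lemma harmonic_directional_bound M al be rho :
  0 < rho < R0 -> (forall s, polar u a b rho s <= M) -> al ^ 2 + be ^ 2 <= 1 ->
  rho * (al * ux a b + be * uy a b) <= 2 * (M - u a b).
Proof.
  intros Hrho HM Hab.
  (* integrate [(M - u) (1 + al cos + be sin) >= 0] over the circle of radius [rho] *)
  pose proof (is_RInt_plus _ _ _ _ _ _
    (is_RInt_minus _ _ _ _ _ _ (is_RInt_const 0 (2 * PI) M) (harmonic_mean_value rho ltac:(lra)))
    (is_RInt_minus _ _ _ _ _ _ (is_RInt_scal _ _ _ M _ (is_RInt_trig_comb al be))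
       (harmonic_first_moment al be rho ltac:(lra)))) as I.
  apply is_RInt_ge_0 in I; [ | pose proof PI_RGT_0; lra | ].
  - revert I; unfold minus, plus, opp, scal; simpl; unfold mult; simpl.
    pose proof PI_RGT_0; intros I.
    apply (Rmult_le_reg_l PI); [lra|]; nra.
  - intros s _; specialize (HM s); pose proof (Rabs_trig_comb_le al be s Hab) as Ht.
    apply Rabs_le_between in Ht.
    unfold minus, plus, opp, scal; simpl; unfold mult; simpl.
    replace (M + - polar u a b rho s + (M * (al * cos s + be * sin s)
             + - (polar u a b rho s * (al * cos s + be * sin s))))
      with ((M - polar u a b rho s) * (1 + (al * cos s + be * sin s))) by ring.
    apply Rmult_le_pos; lra.
Qed.

End Disc.

Section Circle.
Variables M r : R.
Hypothesis Hr : 0 < r < 1.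
Hypothesis u_le_M : forall x y, x ^ 2 + y ^ 2 <= ((1 + r) / 2) ^ 2 -> u x y <= M.

(* The disc of radius [(1 - r) / 2] around a point of [|z| = r] lies in [|z| <= (1 + r) / 2]. *)
Lemma angular_derivative_bound al :
  r * Rabs (sin al * ux (r * cos al) (r * sin al) - cos al * uy (r * cos al) (r * sin al))
  <= 4 / (1 - r) * (M - u (r * cos al) (r * sin al)).
Proof.
  set (rho := (1 - r) / 2); set (R0 := 3 * (1 - r) / 4).
  assert (disc : forall rho' t, Rabs rho' < R0 ->
                   in_D (r * cos al + rho' * cos t) (r * sin al + rho' * sin t)).
  { intros rho' t H; unfold in_D; eapply Rle_lt_trans; [apply norm_polar_le; lra|].
    pose proof (Rabs_pos rho'); unfold R0 in H; nra. }
  assert (HM : forall t, polar u (r * cos al) (r * sin al) rho t <= M).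
  { intros t; apply u_le_M; eapply Rle_trans; [apply norm_polar_le; lra|].
    rewrite Rabs_right by (unfold rho; lra); unfold rho; nra. }
  pose proof (sin2_cos2 al) as E; unfold Rsqr in E.
  pose proof (harmonic_directional_bound _ _ R0 disc M
                (sin al) (- cos al) rho ltac:(unfold rho, R0; lra) HM ltac:(nra)) as B1.
  pose proof (harmonic_directional_bound _ _ R0 disc M
                (- sin al) (cos al) rho ltac:(unfold rho, R0; lra) HM ltac:(nra)) as B2.
  assert (Hpos : 0 <= M - u (r * cos al) (r * sin al)).
  { cut (u (r * cos al) (r * sin al) <= M); [lra|].
    apply u_le_M; nra. }
  set (g := sin al * ux (r * cos al) (r * sin al) - cos al * uy (r * cos al) (r * sin al)).
  assert (Hg : (1 - r) * Rabs g <= 4 * (M - u (r * cos al) (r * sin al))).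
  { unfold rho in B1, B2; unfold g, Rabs; destruct Rcase_abs; lra. }
  apply (Rmult_le_reg_r (1 - r)); [lra|].
  replace (4 / (1 - r) * (M - u (r * cos al) (r * sin al)) * (1 - r))
    with (4 * (M - u (r * cos al) (r * sin al))) by (field; lra).
  pose proof (Rabs_pos g); nra.
Qed.
End Circle.

End Harmonic.

Lemma harmonic_angular_Harnack u M r theta delta :
  harmonic_D u -> 0 < r < 1 ->
  (forall x y, x ^ 2 + y ^ 2 <= ((1 + r) / 2) ^ 2 -> u x y <= M) ->
  M - u (r * cos (theta + delta)) (r * sin (theta + delta))
  <= (M - u (r * cos theta) (r * sin theta)) * exp (4 / (1 - r) * Rabs delta).
Proof.
  intros (ux & uy & uxx & uxy & uyx & uyy & harmonic) Hr HM.
  set (X s := r * cos (theta + s)); set (Y s := r * sin (theta + s)).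
  assert (HX : forall s, in_D (X s) (Y s)).
  { intros s; unfold in_D, X, Y; pose proof (sin2_cos2 (theta + s)) as E; unfold Rsqr in E; nra. }
  pose proof (Gronwall (fun s => M - u (X s) (Y s))
                (fun s => r * (sin (theta + s) * ux (X s) (Y s) - cos (theta + s) * uy (X s) (Y s)))
                (4 / (1 - r)) delta) as G.
  unfold X, Y in G; rewrite Rplus_0_r in G; apply G; clear G.
  - intros s; evar_last.
    + apply (is_derive_minus (fun _ => M) (fun s => u (X s) (Y s))); [apply is_derive_const|].
      apply (is_derive_comp_C1_on_D u ux uy X Y);
        [apply (C1_on_D_u _ _ _ _ _ _ _ harmonic) | apply HX | |];
        unfold X, Y; auto_derive; auto.
    + unfold X, Y, minus, plus, opp, zero; simpl; ring.
  - intros s; rewrite Rabs_mult, (Rabs_right r) by lra.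
    apply (angular_derivative_bound u ux uy uxx uxy uyx uyy harmonic M r Hr HM).
Qed.

Lemma wlog_eq p : p < 1 -> wlog p = 1 - ln (1 - p).
Proof.
  intros H; unfold wlog, Rdiv; rewrite ln_mult, ln_exp, ln_Rinv; try lra.
  - apply exp_pos.
  - apply Rinv_0_lt_compat; lra.
Qed.

Lemma wlog_ge_1 p : 0 <= p < 1 -> 1 <= wlog p.
Proof.
  intros H; rewrite wlog_eq by lra.
  assert (ln (1 - p) <= 0) by (rewrite <- ln_1; apply ln_le; lra); lra.
Qed.

Lemma wlog_le p q : p <= q -> q < 1 -> wlog p <= wlog q.
Proof.
  intros Hpq Hq; rewrite !wlog_eq by lra.
  assert (ln (1 - q) <= ln (1 - p)) by (apply ln_le; lra); lra.
Qed.

Lemma wlog_midpoint r : r < 1 -> wlog ((1 + r) / 2) = wlog r + ln 2.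
Proof.
  intros H; rewrite !wlog_eq by lra.
  replace (1 - (1 + r) / 2) with ((1 - r) * / 2) by field.
  rewrite ln_mult, ln_Rinv; lra.
Qed.

Lemma ln_2_lt_1 : ln 2 < 1.
Proof.
  rewrite <- (ln_exp 1); apply ln_increasing; [lra|].
  pose proof (exp_ineq1 1); lra.
Qed.

Lemma le_wlog_of_is_lub u C x y :
  is_lub (ratio_set u) C -> in_D x y -> u x y <= C * wlog (sqrt (x ^ 2 + y ^ 2)).
Proof.
  intros [Hub _] HD.
  assert (Hw : 1 <= wlog (sqrt (x ^ 2 + y ^ 2))).
  { apply wlog_ge_1; split; [apply sqrt_pos|].
    rewrite <- sqrt_1; apply sqrt_lt_1_alt; unfold in_D in HD; split; [nra | lra]. }
  assert (Hq : u x y / wlog (sqrt (x ^ 2 + y ^ 2)) <= C) by (apply Hub; exists x, y; auto).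
  apply (Rmult_le_compat_r (wlog (sqrt (x ^ 2 + y ^ 2)))) in Hq; [|lra].
  unfold Rdiv in Hq; rewrite Rmult_assoc, Rinv_l, Rmult_1_r in Hq by lra; lra.
Qed.

Lemma le_on_disc_of_is_lub u C r : is_lub (ratio_set u) C -> 0 <= C -> 0 < r < 1 ->
  forall x y, x ^ 2 + y ^ 2 <= ((1 + r) / 2) ^ 2 -> u x y <= C * (wlog r + ln 2).
Proof.
  intros Hlub HC Hr x y Hxy.
  eapply Rle_trans; [apply le_wlog_of_is_lub; [exact Hlub | unfold in_D; nra]|].
  rewrite <- wlog_midpoint by lra; apply Rmult_le_compat_l; [exact HC|].
  apply wlog_le; [ | lra].
  rewrite <- (sqrt_pow2 ((1 + r) / 2)) by lra; apply sqrt_le_1_alt, Hxy.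
Qed.

Lemma le_wlog_on_circle_of_is_lub u C r theta : is_lub (ratio_set u) C -> 0 <= r < 1 ->
  u (r * cos theta) (r * sin theta) <= C * wlog r.
Proof.
  intros Hlub Hr.
  assert (Hn : (r * cos theta) ^ 2 + (r * sin theta) ^ 2 = r ^ 2).
  { pose proof (sin2_cos2 theta) as E; unfold Rsqr in E; nra. }
  replace r with (sqrt ((r * cos theta) ^ 2 + (r * sin theta) ^ 2)) at 3
    by (rewrite Hn; apply sqrt_pow2; lra).
  apply le_wlog_of_is_lub; [exact Hlub | unfold in_D; rewrite Hn; nra].
Qed.

Lemma exp_le_of_Rabs_lt k r delta : 1 < k -> r < 1 -> Rabs delta < ln k / 4 * (1 - r) ->
  exp (4 / (1 - r) * Rabs delta) <= k.
Proof.
  intros Hk Hr Hdelta.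
  rewrite <- (exp_ln k) by lra; apply Rlt_le, exp_increasing.
  apply (Rmult_lt_reg_r (1 - r)); [lra|].
  replace (4 / (1 - r) * Rabs delta * (1 - r)) with (4 * Rabs delta) by (field; lra); lra.
Qed.

Lemma Harnack_gt_half sigma C L u0 u1 e :
  0 < sigma <= C -> 1 <= L -> sigma * L < u0 <= C * L -> e <= 1 + sigma / (4 * C) ->
  C * (L + ln 2) - u1 <= (C * (L + ln 2) - u0) * e ->
  sigma / 2 * L < u1.
Proof.
  intros Hs HL Hu0 He H.
  assert (Hln2 : 0 < ln 2 < 1) by (split; [rewrite <- ln_1; apply ln_increasing |
                                            apply ln_2_lt_1]; lra).
  assert (H' : C * (L + ln 2) - u1 <= (C * (L + ln 2) - u0) * (1 + sigma / (4 * C))).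
  { eapply Rle_trans; [exact H | apply Rmult_le_compat_l; [nra | exact He]]. }
  assert (E : C * (L + ln 2) * (sigma / (4 * C)) = sigma * (L + ln 2) / 4) by (field; lra).
  assert (sigma * L * (sigma / (4 * C)) <= u0 * (sigma / (4 * C))).
  { apply Rmult_le_compat_r; [apply Rlt_le, Rdiv_lt_0_compat | ]; lra. }
  assert (0 <= sigma * L * (sigma / (4 * C))).
  { apply Rmult_le_pos; [apply Rmult_le_pos | apply Rlt_le, Rdiv_lt_0_compat]; lra. }
  assert (sigma * ln 2 <= sigma * L) by (apply Rmult_le_compat_l; lra).
  nra.
Qed.

Theorem lemma7 :
  forall C sigma : R, 0 < sigma ->
  exists tau1 : R, 0 < tau1 /\
    forall u : R -> R -> R,
      harmonic_D u ->
      is_lub (ratio_set u) C ->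
      forall theta r : R,
        0 <= theta <= 2 * PI ->
        0 < r < 1 ->
        u (r * cos theta) (r * sin theta) > sigma * wlog r ->
        forall delta : R,
          Rabs delta < tau1 * (1 - r) ->
          u (r * cos (theta + delta)) (r * sin (theta + delta)) > sigma / 2 * wlog r.
Proof.
  intros C sigma Hs.
  (* if [C < sigma] no [u] satisfies the hypotheses; [Rmax] just keeps [k > 1] *)
  set (k := 1 + sigma / (4 * Rmax C sigma)).
  assert (Hk : 1 < k).
  { pose proof (Rmax_r C sigma); unfold k.
    assert (0 < sigma / (4 * Rmax C sigma)) by (apply Rdiv_lt_0_compat; lra); lra. }
  exists (ln k / 4); split.
  { apply Rdiv_lt_0_compat; [rewrite <- ln_1; apply ln_increasing |]; lra. }
  intros u Hu Hlub theta r _ Hr Hu0 delta Hdelta.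
  assert (HL : 1 <= wlog r) by (apply wlog_ge_1; lra).
  pose proof (le_wlog_on_circle_of_is_lub u C r theta Hlub ltac:(lra)) as Hcirc.
  assert (HC : sigma < C).
  { destruct (Rle_or_lt C sigma) as [HC | HC]; [ | exact HC].
    assert (C * wlog r <= sigma * wlog r) by (apply Rmult_le_compat_r; lra); lra. }
  apply Rlt_gt, (Harnack_gt_half sigma C (wlog r) (u (r * cos theta) (r * sin theta)) _
                   (exp (4 / (1 - r) * Rabs delta))); [lra | lra | lra | |].
  - replace (1 + sigma / (4 * C)) with k by (unfold k; rewrite Rmax_left by lra; reflexivity).
    apply exp_le_of_Rabs_lt; lra.
  - apply harmonic_angular_Harnack; [exact Hu | exact Hr |].
    apply le_on_disc_of_is_lub; [exact Hlub | lra | exact Hr].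
Qed.
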